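(* Let $H,A$ be as in the context and $L\subseteq\ker\epsilon\subset H$ a subspace stable under the quantum double action $h\triangleright x=h_{(1)}xSh_{(2)}$, $a\triangleright x=\langle a,x_{(1)}\rangle x_{(2)}-\langle a,x\rangle1$. Define $[\ ,\ ]:L\otimes L\to L$ by $[x,y]=x_{(1)}\,y\,Sx_{(2)}$ and $\Psi:L\otimes L\to L\otimes L$ by \[\Psi(x\otimes y)=[x_{(1)},y]\otimes x_{(2)}-[x,y]\otimes 1\] (which equals $\sum_a e_a\triangleright y\otimes f^a\triangleright x$ for dual bases $\{e_a\}$ of $H$, $\{f^a\}$ of $A$, and so takes values in $L\otimes L$; here $[h,y]:=h_{(1)}ySh_{(2)}$ for $h\in H$). Then for all $x,y,z\in L$, \[[x,[y,z]]=[[x,y],z]+([\ ,[\ ,z]])\circ\Psi(x\otimes y),\qquad [x,y]=xy-\cdot\,\Psi(x\otimes y),\] where $[\ ,[\ ,z]](u\otimes v)=[u,[v,z]]$ and $\cdot$ is multiplication in $H$.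
   Context: $H,A$ are Hopf algebras over $\mathbb{C}$ with invertible antipodes, non-degenerately paired by a Hopf pairing $\langle\ ,\ \rangle$; Sweedler notation. $\Psi$ is the quantum double braiding on $L\otimes L$. *)

(* Hopf algebras (possibly infinite-dimensional) over a field,
   with the coproduct given in Sweedler form as a finite list of pairs,
   tensors being compared through all bilinear (resp. trilinear) forms. *)
From mathcomp Require Import all_boot all_algebra.
From mathcomp Require Import reals complex.
Set Implicit Arguments. Unset Strict Implicit. Unset Printing Implicit Defensive.
Import GRing.Theory.
Local Open Scope ring_scope.

Section Tensors.
Variable K : fieldType.

Definition bilin_form (U V : lmodType K) (f : U -> V -> K) : Prop :=
  (forall (a : K) (u u' : U) (v : V), f (a *: u + u') v = a * f u v + f u' v) /\
  (forall (a : K) (u : U) (v v' : V), f u (a *: v + v') = a * f u v + f u v').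

Definition trilin_form (U V W : lmodType K) (f : U -> V -> W -> K) : Prop :=
  (forall (a : K) (u u' : U) (v : V) (w : W),
      f (a *: u + u') v w = a * f u v w + f u' v w) /\
  (forall (a : K) (u : U) (v v' : V) (w : W),
      f u (a *: v + v') w = a * f u v w + f u v' w) /\
  (forall (a : K) (u : U) (v : V) (w w' : W),
      f u v (a *: w + w') = a * f u v w + f u v w').

(* A finite list t = [:: (u_1,v_1); ...] represents the tensor
   sum_i u_i (x) v_i of U (x) V.  Two lists represent the same tensor iff
   all bilinear forms agree on them (U (x) V embeds in Bil(U,V)^* ). *)
Definition teq2 (U V : lmodType K) (t t' : seq (U * V)) : Prop :=
  forall f : U -> V -> K, bilin_form f ->
    \sum_(p <- t) f p.1 p.2 = \sum_(p <- t') f p.1 p.2.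

Definition teq3 (U V W : lmodType K) (t t' : seq (U * V * W)) : Prop :=
  forall f : U -> V -> W -> K, trilin_form f ->
    \sum_(p <- t) f p.1.1 p.1.2 p.2 = \sum_(p <- t') f p.1.1 p.1.2 p.2.

Definition is_hopf (H : algType K) (cop : H -> seq (H * H))
    (eps : H -> K) (S : H -> H) : Prop :=
  [/\ [/\
      (forall (a : K) (x y : H),
          teq2 (cop (a *: x + y))
               ([seq (a *: p.1, p.2) | p <- cop x] ++ cop y)),
      (forall x y : H,
          teq2 (cop (x * y))
               [seq (p.1 * q.1, p.2 * q.2) | p <- cop x, q <- cop y]) &
      teq2 (cop 1) [:: (1, 1)] ],
      (forall x : H,
          teq3 [seq (q.1, q.2, p.2) | p <- cop x, q <- cop p.1]
               [seq (p.1, q.1, q.2) | p <- cop x, q <- cop p.2]),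
      [/\ forall (a : K) (x y : H), eps (a *: x + y) = a * eps x + eps y,
          eps 1 = 1,
          forall x y : H, eps (x * y) = eps x * eps y,
          forall x : H, \sum_(p <- cop x) eps p.1 *: p.2 = x &
          forall x : H, \sum_(p <- cop x) eps p.2 *: p.1 = x] &
      [/\ forall (a : K) (x y : H), S (a *: x + y) = a *: S x + S y,
          forall x : H, \sum_(p <- cop x) S p.1 * p.2 = eps x *: 1 &
          forall x : H, \sum_(p <- cop x) p.1 * S p.2 = eps x *: 1]].

Definition is_hopf_pairing (H A : algType K)
    (copH : H -> seq (H * H)) (epsH : H -> K) (SH : H -> H)
    (copA : A -> seq (A * A)) (epsA : A -> K) (SA : A -> A)
    (pr : A -> H -> K) : Prop :=
  [/\ bilin_form pr,
      [/\
      (forall (a b : A) (h : H),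
          pr (a * b) h = \sum_(p <- copH h) pr a p.1 * pr b p.2) &
      (forall (a : A) (h g : H),
          pr a (h * g) = \sum_(p <- copA a) pr p.1 h * pr p.2 g)],
      (forall h : H, pr 1 h = epsH h),
      (forall a : A, pr a 1 = epsA a) &
      (forall (a : A) (h : H), pr (SA a) h = pr a (SH h))].

Definition nondegenerate_pairing (H A : lmodType K) (pr : A -> H -> K) : Prop :=
  (forall a : A, (forall h : H, pr a h = 0) -> a = 0) /\
  (forall h : H, (forall a : A, pr a h = 0) -> h = 0).

Definition is_subspace (V : lmodType K) (L : V -> Prop) : Prop :=
  L 0 /\ forall (a : K) (u v : V), L u -> L v -> L (a *: u + v).

Section Bracket.
Variables (H : algType K) (cop : H -> seq (H * H)) (S : H -> H).

Definition adbr (h y : H) : H := \sum_(p <- cop h) p.1 * y * S p.2.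

Definition Psi (x y : H) : seq (H * H) :=
  [seq (adbr p.1 y, p.2) | p <- cop x] ++ [:: (- adbr x y, 1)].

End Bracket.
End Tensors.

From HB Require Import structures.
From mathcomp Require Import all_boot all_algebra.
From mathcomp Require Import reals complex.
Set Implicit Arguments. Unset Strict Implicit. Unset Printing Implicit Defensive.
Import GRing.Theory.
Local Open Scope ring_scope.

(* Both identities come from two properties of the adjoint action
   [h, y] = h_(1) y S h_(2): it is an action, [hg, y] = [h, [g, y]]
   (because S is anti-multiplicative), and [x_(1), y] x_(2) = x y.
   Indeed the Psi-term equals sum [[x_(1), y], [x_(2), z]] - [[x, y], z]
   = [[x_(1), y] x_(2), z] - [[x, y], z] = [x, [y, z]] - [[x, y], z], and
   sum [x_(1), y] x_(2) - [x, y] = x y - [x, y].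
   Tensors are only specified through scalar bilinear forms, so identities
   between H-valued Sweedler sums are transported through the nondegenerate
   pairing. *)

Section Multilinear.
Variable K : fieldType.

Definition linmap (U : lmodType K) (V : zmodType) (s : GRing.Scale.law K V)
    (f : U -> V) (hf : linear_for s f) : {linear U -> V | s} :=
  HB.pack f (GRing.isLinear.Build K U V s f hf).

Lemma linear_sum_of (U V : lmodType K) (f : U -> V) (hf : linear f)
    I (r : seq I) (G : I -> U) :
  f (\sum_(i <- r) G i) = \sum_(i <- r) f (G i).
Proof. by have := raddf_sum (linmap hf) r xpredT G. Qed.

Lemma linearZ_of (U V : lmodType K) (f : U -> V) (hf : linear f) a u :
  f (a *: u) = a *: f u.
Proof. exact: linearZZ (linmap hf) a u. Qed.

Lemma linearN_of (U V : lmodType K) (f : U -> V) (hf : linear f) u :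
  f (- u) = - f u.
Proof. exact: raddfN (linmap hf) u. Qed.

Definition bilinear_map (U V W : lmodType K) (F : U -> V -> W) : Prop :=
  (forall v, linear (F^~ v)) /\ (forall u, linear (F u)).

Definition trilinear_map (U V W X : lmodType K) (F : U -> V -> W -> X) : Prop :=
  [/\ forall v w, linear (fun u => F u v w),
      forall u w, linear (fun v => F u v w) &
      forall u v, linear (F u v)].

Section Separation.
Variables (A : Type) (W : lmodType K) (pr : A -> W -> K).
Hypothesis pr_scalar : forall a, scalar (pr a).
Hypothesis pr_sep : forall w, (forall a, pr a w = 0) -> w = 0.

Lemma eq_by_pairing u v : (forall a, pr a u = pr a v) -> u = v.
Proof.
move=> Euv; apply/eqP; rewrite -subr_eq0; apply/eqP; apply: pr_sep => a.
by have /= -> := raddfB (linmap (pr_scalar a)) u v; rewrite Euv subrr.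
Qed.

Lemma pr_sum a I (r : seq I) (G : I -> W) :
  pr a (\sum_(i <- r) G i) = \sum_(i <- r) pr a (G i).
Proof. by have := raddf_sum (linmap (pr_scalar a)) r xpredT G. Qed.

Lemma teq2_sum (U V : lmodType K) (t t' : seq (U * V)) (F : U -> V -> W) :
  bilinear_map F -> teq2 t t' ->
  \sum_(p <- t) F p.1 p.2 = \sum_(p <- t') F p.1 p.2.
Proof.
move=> [F1 F2] Ett'; apply: eq_by_pairing => a; rewrite !pr_sum.
apply: (Ett' (fun u v => pr a (F u v))); split=> c u v w.
- by rewrite F1 pr_scalar.
- by rewrite F2 pr_scalar.
Qed.

Lemma teq3_sum (U V X : lmodType K) (t t' : seq (U * V * X))
    (F : U -> V -> X -> W) :
  trilinear_map F -> teq3 t t' ->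
  \sum_(p <- t) F p.1.1 p.1.2 p.2 = \sum_(p <- t') F p.1.1 p.1.2 p.2.
Proof.
move=> [F1 F2 F3] Ett'; apply: eq_by_pairing => a; rewrite !pr_sum.
apply: (Ett' (fun u v w => pr a (F u v w))); split; [|split] => c u v w w'.
- by rewrite F1 pr_scalar.
- by rewrite F2 pr_scalar.
- by rewrite F3 pr_scalar.
Qed.

End Separation.
End Multilinear.

Section HopfAlgebra.
Variables (K : fieldType) (H : algType K) (cop : H -> seq (H * H))
  (eps : H -> K) (S : H -> H).
Hypothesis hH : is_hopf cop eps S.
Variables (A : Type) (pr : A -> H -> K).
Hypothesis pr_scalar : forall a, scalar (pr a).
Hypothesis pr_sep : forall h, (forall a, pr a h = 0) -> h = 0.

Lemma antipode_linear : linear S.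
Proof. by case: hH => _ _ _ []. Qed.

Lemma counitM x y : eps (x * y) = eps x * eps y.
Proof. by case: hH => _ _ []. Qed.

Lemma counit1 : eps 1 = 1.
Proof. by case: hH => _ _ []. Qed.

Lemma sum_antipode_l x : \sum_(p <- cop x) S p.1 * p.2 = eps x *: 1.
Proof. by case: hH => _ _ _ []. Qed.

Lemma sum_antipode_r x : \sum_(p <- cop x) p.1 * S p.2 = eps x *: 1.
Proof. by case: hH => _ _ _ []. Qed.

Ltac multilinear :=
  repeat split; intros; do 2 (hnf; intros);
  do 4 rewrite ?(mulrDr, mulrDl) -?scalerAl -?scalerAr ?antipode_linear.

Lemma sum_counit_l (f : H -> H) x : linear f ->
  \sum_(p <- cop x) eps p.1 *: f p.2 = f x.
Proof.
case: hH => _ _ [_ _ _ e1 _] _ hf.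
by rewrite -{2}(e1 x) (linear_sum_of hf); apply: eq_bigr => p _; rewrite linearZ_of.
Qed.

Lemma sum_counit_r (f : H -> H) x : linear f ->
  \sum_(p <- cop x) eps p.2 *: f p.1 = f x.
Proof.
case: hH => _ _ [_ _ _ _ e2] _ hf.
by rewrite -{2}(e2 x) (linear_sum_of hf); apply: eq_bigr => p _; rewrite linearZ_of.
Qed.

Lemma sum_cop_linear (B : H -> H -> H) : bilinear_map B ->
  linear (fun u => \sum_(p <- cop u) B p.1 p.2).
Proof.
case: hH => [[cop_lin _ _] _ _ _] [B1 B2] c u v.
rewrite (teq2_sum pr_scalar pr_sep (conj B1 B2) (cop_lin c u v)).
rewrite big_cat big_map scaler_sumr; congr (_ + _).
by apply: eq_bigr => p _; rewrite (linearZ_of (B1 p.2)).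
Qed.

Lemma sum_copM (B : H -> H -> H) x y : bilinear_map B ->
  \sum_(r <- cop (x * y)) B r.1 r.2 =
  \sum_(p <- cop x) \sum_(q <- cop y) B (p.1 * q.1) (p.2 * q.2).
Proof.
case: hH => [[_ copM _] _ _ _] hB.
by rewrite (teq2_sum pr_scalar pr_sep hB (copM x y)) big_allpairs_dep.
Qed.

Lemma sum_cop1 (B : H -> H -> H) : bilinear_map B ->
  \sum_(r <- cop 1) B r.1 r.2 = B 1 1.
Proof.
case: hH => [[_ _ cop1] _ _ _] hB.
by rewrite (teq2_sum pr_scalar pr_sep hB cop1) big_seq1.
Qed.

Lemma sum_coassoc (F : H -> H -> H -> H) x : trilinear_map F ->
  \sum_(p <- cop x) \sum_(q <- cop p.1) F q.1 q.2 p.2 =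
  \sum_(p <- cop x) \sum_(q <- cop p.2) F p.1 q.1 q.2.
Proof.
case: hH => _ coassoc _ _ hF.
by have := teq3_sum pr_scalar pr_sep hF (coassoc x); rewrite !big_allpairs_dep.
Qed.

Lemma sum_cop_antipode_r (B : H -> H -> H) x : bilinear_map B ->
  \sum_(p <- cop x) \sum_(q <- cop p.2) B p.1 (q.1 * S q.2) = B x 1.
Proof.
case=> B1 B2; rewrite -(sum_counit_r x (B1 1)); apply: eq_bigr => p _.
by rewrite -(linear_sum_of (B2 p.1)) sum_antipode_r (linearZ_of (B2 p.1)).
Qed.

Lemma sum_cop_antipode_l (B : H -> H -> H) x : bilinear_map B ->
  \sum_(p <- cop x) \sum_(q <- cop p.2) B p.1 (S q.1 * q.2) = B x 1.
Proof.
case=> B1 B2; rewrite -(sum_counit_r x (B1 1)); apply: eq_bigr => p _.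
by rewrite -(linear_sum_of (B2 p.1)) sum_antipode_l (linearZ_of (B2 p.1)).
Qed.

Lemma antipodeM_expand h g :
  S (h * g) = \sum_(p <- cop h) \sum_(q <- cop p.1) S (q.1 * g) * q.2 * S p.2.
Proof.
rewrite (sum_coassoc (F := fun a b c => S (a * g) * b * S c)); last by multilinear.
have := sum_cop_antipode_r (B := fun a c => S (a * g) * c) h; rewrite mulr1 => <-.
  by apply: eq_bigr => p _; apply: eq_bigr => q _; rewrite mulrA.
by multilinear.
Qed.

Lemma sum_antipode_insert u v w g :
  \sum_(p <- cop g) \sum_(q <- cop p.1) S (u * q.1) * (v * q.2) * (S p.2 * w)
  = S (u * g) * v * w.
Proof.
rewrite (sum_coassoc (F := fun a b c => S (u * a) * (v * b) * (S c * w)));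
  last by multilinear.
have := sum_cop_antipode_r (B := fun a c => S (u * a) * v * c * w) g.
rewrite mulr1 => <-; last by multilinear.
by apply: eq_bigr => p _; apply: eq_bigr => q _; rewrite !mulrA.
Qed.

Lemma antipodeM h g : S (h * g) = S g * S h.
Proof.
have B_lin c : bilinear_map (fun a b => S a * b * c) by multilinear.
rewrite antipodeM_expand.
transitivity (\sum_(p <- cop h) \sum_(q <- cop g)
                \sum_(r <- cop (p.1 * q.1)) S r.1 * r.2 * (S q.2 * S p.2)).
  apply: eq_bigr => p _.
  under eq_bigr => p' _ do rewrite -sum_antipode_insert.
  by rewrite exchange_big; apply: eq_bigr => q _; rewrite (sum_copM _ _ (B_lin _)).
transitivity (\sum_(p <- cop h) eps p.1 *: \sum_(q <- cop g) eps q.1 *: (S q.2 * S p.2)).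
  apply: eq_bigr => p _; rewrite scaler_sumr; apply: eq_bigr => q _.
  by rewrite -mulr_suml sum_antipode_l counitM -scalerAl mul1r scalerA.
have mulSr_lin c : linear (fun a => S a * c) by multilinear.
under eq_bigr => p _ do rewrite (sum_counit_l g (mulSr_lin (S p.2))).
by rewrite (sum_counit_l (f := fun a => S g * S a)) //; multilinear.
Qed.

Lemma antipode1 : S 1 = 1.
Proof.
have := sum_antipode_l 1; rewrite (sum_cop1 (B := fun a b => S a * b)).
  by rewrite counit1 scale1r mulr1.
by multilinear.
Qed.

Local Notation ad := (adbr cop S).

Lemma adbr_linear z : linear (ad^~ z).
Proof. by apply: (sum_cop_linear (B := fun a b => a * z * S b)); multilinear. Qed.

Lemma adbrM u v z : ad (u * v) z = ad u (ad v z).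
Proof.
rewrite /adbr (sum_copM (B := fun a b => a * z * S b)); last by multilinear.
apply: eq_bigr => p _; rewrite mulr_sumr mulr_suml; apply: eq_bigr => q _.
by rewrite antipodeM !mulrA.
Qed.

Lemma adbr1 z : ad 1 z = z.
Proof.
rewrite /adbr (sum_cop1 (B := fun a b => a * z * S b)); last by multilinear.
by rewrite antipode1 mul1r mulr1.
Qed.

Lemma sum_adbr_mul x y : \sum_(p <- cop x) ad p.1 y * p.2 = x * y.
Proof.
under eq_bigr => p _ do rewrite /adbr mulr_suml.
rewrite (sum_coassoc (F := fun a b c => a * y * S b * c)); last by multilinear.
have := sum_cop_antipode_l (B := fun a c => a * y * c) x.
rewrite mulr1 => <-; last by multilinear.
by apply: eq_bigr => p _; apply: eq_bigr => q _; rewrite !mulrA.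
Qed.

Lemma adbr_sum I (r : seq I) (G : I -> H) z :
  ad (\sum_(i <- r) G i) z = \sum_(i <- r) ad (G i) z.
Proof. by have := linear_sum_of (adbr_linear z) r G. Qed.

Lemma adbr_Psi x y z :
  ad x (ad y z) = ad (ad x y) z + \sum_(p <- Psi cop S x y) ad p.1 (ad p.2 z).
Proof.
rewrite /Psi big_cat big_map big_seq1 /= adbr1 (linearN_of (adbr_linear z)).
rewrite addrCA subrr addr0.
by under eq_bigr => p _ do rewrite -adbrM; rewrite -adbr_sum sum_adbr_mul adbrM.
Qed.

Lemma adbr_Psi_mul x y : ad x y = x * y - \sum_(p <- Psi cop S x y) p.1 * p.2.
Proof.
rewrite /Psi big_cat big_map big_seq1 /= sum_adbr_mul mulr1.
by rewrite opprD opprK addrA subrr add0r.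
Qed.

End HopfAlgebra.

Theorem proposition2p4 (R : realType) (H A : algType R[i])
    (copH : H -> seq (H * H)) (epsH : H -> R[i]) (SH : H -> H)
    (copA : A -> seq (A * A)) (epsA : A -> R[i]) (SA : A -> A)
    (pr : A -> H -> R[i])
    (hH : is_hopf copH epsH SH) (hSH : bijective SH)
    (hA : is_hopf copA epsA SA) (hSA : bijective SA)
    (hpr : is_hopf_pairing copH epsH SH copA epsA SA pr)
    (hnd : nondegenerate_pairing pr)
    (L : H -> Prop) (hL : is_subspace L)
    (hLeps : forall x, L x -> epsH x = 0)
    (hLH : forall h x, L x -> L (adbr copH SH h x))
    (hLA : forall a x, L x ->
             L (\sum_(p <- copH x) pr a p.1 *: p.2 - pr a x *: 1)) :
  forall x y z : H, L x -> L y -> L z ->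
    adbr copH SH x (adbr copH SH y z)
      = adbr copH SH (adbr copH SH x y) z
        + \sum_(p <- Psi copH SH x y) adbr copH SH p.1 (adbr copH SH p.2 z)
    /\ adbr copH SH x y = x * y - \sum_(p <- Psi copH SH x y) p.1 * p.2.
Proof.
(* The identities hold on all of H; the conditions on L only guarantee that
   Psi maps L (x) L into L (x) L. *)
move=> x y z _ _ _.
have [[_ pr_linear_r] _ _ _ _] := hpr.
have pr_scalar a : scalar (pr a) := fun c => pr_linear_r c a.
have [_ pr_sep] := hnd.
split; first exact: (adbr_Psi hH pr_scalar pr_sep x y z).
exact: (adbr_Psi_mul hH pr_scalar pr_sep x y).
Qed.
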